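(* In the setting below, consider the moment selection criterion $MSC(S)=J_n(S)-h(|S|)\kappa_n$, where $h$ is strictly increasing, $\lim_{n\to\infty}\kappa_n=\infty$ and $\kappa_n=o(n)$, and let the selected moment set be the minimizer of $MSC(S)$ over $S\in\mathscr{S}$. Then $MSC$ selects the full moment set with probability approaching one.
   Context: Setting: $\theta\in\Theta\subseteq\mathbb{R}^r$; $f=(g',h')'$ a $(p+q)$-vector of moment functions; triangular array $\{Z_{ni}\}$ with $E[g(Z_{ni},\theta_0)]=0$, $E[h(Z_{ni},\theta_0)]=n^{-1/2}\tau$, $\{f(Z_{ni},\theta_0)\}$ uniformly integrable, $Z_{ni}\to_dZ_i$ identically distributed (law $Z$); $f_n(\theta)=n^{-1}\sum_if(Z_{ni},\theta)$. $\mathscr{S}$ is a finite collection of moment sets (subsets of the $p+q$ moment conditions, each with $|S|>r$, where $|S|$ is the number of moment conditions) that contains the full moment set of all $p+q$ conditions. For each $S\in\mathscr{S}$ with zero-one selection matrix $\Xi_S$ and weight $\widetilde{W}_S$, $\widehat{\theta}_S=\arg\min_\theta[\Xi_Sf_n(\theta)]'\widetilde{W}_S[\Xi_Sf_n(\theta)]$, and: $\theta_0$ interior to compact $\Theta$; $\widetilde{W}_S\to_pW_S>0$; $W_S\Xi_SE[f(Z,\theta)]=0$ iff $\theta=\theta_0$; $E[f(Z,\theta)]$ continuous; $\sup_\theta\|f_n(\theta)-E[f(Z,\theta)]\|\to_p0$; $f$ a.s. differentiable near $\theta_0$; $\sup_\theta\|\nabla f_n(\theta)-E[\nabla f(Z,\theta)]\|\to_p0$;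 $\sqrt{n}f_n(\theta_0)\to_dM+(0',\tau')'$ with $M\sim N(0,\Omega)$; $F_S'W_SF_S$ invertible, where $F_S=\Xi_S(E[\nabla_\theta g(Z,\theta_0)]',E[\nabla_\theta h(Z,\theta_0)]')'$. $J_n(S)=n[\Xi_Sf_n(\widehat{\theta}_S)]'\widehat{\Omega}_S^{-1}[\Xi_Sf_n(\widehat{\theta}_S)]$ with $\widehat{\Omega}_S^{-1}$ consistent for $\Omega_S^{-1}$, $\Omega_S=\Xi_S\mathrm{Var}[f(Z,\theta_0)]\Xi_S'$ positive definite. *)

From HB Require Import structures.
From mathcomp Require Import all_boot all_order all_algebra.
From mathcomp Require Import all_classical all_reals all_analysis.
Set Implicit Arguments. Unset Strict Implicit. Unset Printing Implicit Defensive.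
Import Order.TTheory GRing.Theory Num.Theory.
Import numFieldNormedType.Exports.
Local Open Scope classical_set_scope.
Local Open Scope ring_scope.

Section GMMDefs.
Variable R : realType.

(* zero-one selection matrix Xi_S of a moment set S of the k moment
   conditions: row i picks the i-th element (in increasing order) of S *)
Definition selmx k (S : {set 'I_k}) : 'M[R]_(#|S|, k) :=
  \matrix_(i < #|S|, j < k) ((j == enum_val i)%:R).

Definition posdef n (M : 'M[R]_n) : Prop :=
  M^T = M /\ forall x : 'cV[R]_n, x != 0 -> 0 < (x^T *m M *m x) 0 0.

Definition mx_measurable d (T : measurableType d) m n (X : T -> 'M[R]_(m, n)) :=
  forall i j, measurable_fun [set: T] (fun w => X w i j).

Definition borel_rv d (T : measurableType d) (U : topologicalType) (X : T -> U) :=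
  forall O : set U, open O -> measurable (X @^-1` O).

Definition Emx d (T : measurableType d) (P : probability T R) m n
  (X : T -> 'M[R]_(m, n)) : 'M[R]_(m, n) :=
  \matrix_(i, j) fine ('E_P[fun w => X w i j])%E.

Definition varmx d (T : measurableType d) (P : probability T R) k
  (X : T -> 'cV[R]_k) : 'M[R]_k :=
  \matrix_(i, j) fine (covariance P (fun w => X w i 0) (fun w => X w j 0)).

(* P(A_n) -> 0, in outer probability (A_n need not be measurable):
   A_n is covered by measurable B_n with P(B_n) -> 0 *)
Definition prob_to0 d (T : measurableType d) (P : probability T R)
  (A : nat -> set T) : Prop :=
  exists B : nat -> set T,
    (forall n, measurable (B n) /\ A n `<=` B n) /\
    (fun n => P (B n)) @ \oo --> 0%E.

Definition cvg_prob d (T : measurableType d) (P : probability T R) m n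
  (X : nat -> T -> 'M[R]_(m, n)) (c : 'M[R]_(m, n)) : Prop :=
  forall e : R, 0 < e -> prob_to0 P (fun k => [set w | e < `|X k w - c|]).

(* Y is a Gaussian random vector N(mu, Sig) (Cramer-Wold definition: every
   linear combination a Y is univariate normal with mean a mu and variance
   a Sig a', degenerate at a mu when that variance is 0) *)
Definition gaussian_vec d (T : measurableType d) (P : probability T R) k
  (Y : T -> 'cV[R]_k) (mu : 'cV[R]_k) (Sig : 'M[R]_k) : Prop :=
  mx_measurable Y /\
  forall a : 'rV[R]_k,
    let s2 := (a *m Sig *m a^T) 0 0 in
    let m := (a *m mu) 0 0 in
    if 0 < s2 then
      forall A : set R, measurable A ->
        P ((fun w => (a *m Y w) 0 0) @^-1` A) = normal_prob m (Num.sqrt s2) A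
    else P [set w | (a *m Y w) 0 0 = m] = 1%E.

Definition cvg_dist_gauss d (T : measurableType d) (P : probability T R) k
  (X : nat -> T -> 'cV[R]_k) (mu : 'cV[R]_k) (Sig : 'M[R]_k) : Prop :=
  exists (d2 : measure_display) (T2 : measurableType d2)
         (P2 : probability T2 R) (Y : T2 -> 'cV[R]_k),
    gaussian_vec P2 Y mu Sig /\
    forall phi : 'cV[R]_k -> R, continuous phi ->
      (exists M : R, forall x, `|phi x| <= M) ->
      (fun n => 'E_P[phi \o X n])%E @ \oo --> ('E_P2[phi \o Y])%E.

Definition cvg_dist d (T : measurableType d) (P : probability T R)
  d2 (T2 : measurableType d2) (P2 : probability T2 R) (U : topologicalType)
  (X : nat -> T -> U) (Y : T2 -> U) : Prop :=
  forall phi : U -> R, continuous phi ->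
    (exists M : R, forall x, `|phi x| <= M) ->
    (fun n => 'E_P[phi \o X n])%E @ \oo --> ('E_P2[phi \o Y])%E.

Definition grad r k (g : 'rV[R]_r -> 'cV[R]_k) (th : 'rV[R]_r) : 'M[R]_(k, r) :=
  ('J (fun t => (g t)^T) th)^T.

Definition fbar (T U : Type) r k (f : U -> 'rV[R]_r -> 'cV[R]_k)
  (Z : nat -> nat -> T -> U) (n : nat) (th : 'rV[R]_r) (w : T) : 'cV[R]_k :=
  n%:R^-1 *: \sum_(i < n) f (Z n i w) th.

Definition gradbar (T U : Type) r k (f : U -> 'rV[R]_r -> 'cV[R]_k)
  (Z : nat -> nat -> T -> U) (n : nat) (th : 'rV[R]_r) (w : T) : 'M[R]_(k, r) :=
  n%:R^-1 *: \sum_(i < n) grad (f (Z n i w)) th.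

Definition gmm_obj (T U : Type) r k (f : U -> 'rV[R]_r -> 'cV[R]_k)
  (Z : nat -> nat -> T -> U) (S : {set 'I_k}) (Wn : 'M[R]_#|S|)
  (n : nat) (th : 'rV[R]_r) (w : T) : R :=
  let v := selmx S *m fbar f Z n th w in (v^T *m Wn *m v) 0 0.
Arguments gmm_obj {T U r k} f Z S Wn n th w.

Definition Jstat (T U : Type) r k (f : U -> 'rV[R]_r -> 'cV[R]_k)
  (Z : nat -> nat -> T -> U) (S : {set 'I_k}) (that : 'rV[R]_r)
  (Oinv : 'M[R]_#|S|) (n : nat) (w : T) : R :=
  n%:R * gmm_obj f Z S Oinv n that w.

End GMMDefs.
Arguments selmx {R k} S.
Arguments gmm_obj {R T U r k} f Z S Wn n th w.
Arguments Jstat {R T U r k} f Z S that Oinv n w.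

From HB Require Import structures.
From mathcomp Require Import all_boot all_order all_algebra.
From mathcomp Require Import all_classical all_reals all_analysis.
From mathcomp Require Import ring lra measurable_realfun.
Import Order.TTheory GRing.Theory Num.Theory.
Import numFieldNormedType.Exports.
Local Open Scope classical_set_scope.
Local Open Scope ring_scope.

Set Implicit Arguments. Unset Strict Implicit. Unset Printing Implicit Defensive.

(* The full moment set has J_n(full) = O_p(1): its GMM estimator does at least as well
   as th0 for a weight that is eventually close to a positive definite one, and
   sqrt n f_n(th0) is tight by the CLT, so J_n(full) stays below a constant K with
   probability close to one.  Every other S has J_n(S) >= 0 as soon as Omegahat_S^-1 is
   close to the positive definite Omega_S^-1, and |S| < |full|, hence
   MSC(full) - MSC(S) <= K - (h |full| - h (|full| - 1)) kappa_n < 0 for large n. *)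

Section QuadraticForms.
Variable R : realFieldType.

Definition sqnorm m (x : 'cV[R]_m) : R := \sum_i x i 0 ^+ 2.
Definition qform m (A : 'M[R]_m) (x : 'cV[R]_m) : R := (x^T *m A *m x) 0 0.

Lemma sqnorm_ge0 m (x : 'cV[R]_m) : 0 <= sqnorm x.
Proof. by apply: sumr_ge0 => i _; rewrite sqr_ge0. Qed.

Lemma sqnormZ m a (x : 'cV[R]_m) : sqnorm (a *: x) = a ^+ 2 * sqnorm x.
Proof. by rewrite /sqnorm mulr_sumr; apply: eq_bigr => i _; rewrite mxE exprMn. Qed.

Lemma sqr_entry_le_sqnorm m (x : 'cV[R]_m) j : x j 0 ^+ 2 <= sqnorm x.
Proof. by rewrite /sqnorm (bigD1 j) //= lerDl; apply: sumr_ge0 => i _; rewrite sqr_ge0. Qed.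

Lemma sqnormE m (x : 'cV[R]_m) : sqnorm x = (x^T *m x) 0 0.
Proof. by rewrite mxE; apply: eq_bigr => i _; rewrite mxE expr2. Qed.

Lemma mx_entry_le_norm m n (A : 'M[R]_(m, n)) i j : `|A i j| <= `|A|.
Proof.
by rewrite [leRHS]/Num.Def.normr /= mx_normrE; apply/bigmax_geP; right; exists (i, j).
Qed.

Lemma qformE m (A : 'M[R]_m) x : qform A x = \sum_j \sum_i x i 0 * A i j * x j 0.
Proof.
rewrite /qform mxE; apply: eq_bigr => j _; rewrite mxE mulr_suml.
by apply: eq_bigr => i _; rewrite !mxE.
Qed.

Lemma qform_norm_le m (A : 'M[R]_m) x : `|qform A x| <= m%:R * `|A| * sqnorm x.
Proof.
have amgm (a b : R) : `|a| * `|b| <= (a ^+ 2 + b ^+ 2) / 2.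
  rewrite -[a ^+ 2]real_normK ?num_real // -[b ^+ 2]real_normK ?num_real //.
  by have := sqr_ge0 (`|a| - `|b|); nra.
rewrite qformE; apply: (le_trans (ler_norm_sum _ _ _)).
apply: (@le_trans _ _ (\sum_j \sum_(i < m) `|A| * ((x i 0 ^+ 2 + x j 0 ^+ 2) / 2))).
  apply: ler_sum => j _; apply: (le_trans (ler_norm_sum _ _ _)).
  apply: ler_sum => i _; rewrite !normrM mulrAC [leRHS]mulrC.
  by apply: ler_pM; rewrite ?mulr_ge0 ?amgm ?mx_entry_le_norm.
under eq_bigr do rewrite -mulr_sumr.
rewrite -mulr_sumr.
under eq_bigr do rewrite -mulr_suml big_split /= sumr_const card_ord.
rewrite -mulr_suml big_split /= sumr_const card_ord sumrMnl -/(sqnorm x).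
by rewrite le_eqVlt -[sqnorm x *+ m]mulr_natr; apply/orP; left; apply/eqP; field.
Qed.

Lemma qformDl m (A B : 'M[R]_m) x : qform (A + B) x = qform A x + qform B x.
Proof. by rewrite /qform mulmxDr mulmxDl mxE. Qed.

Lemma bilinear_sym m (A : 'M[R]_m) (x y : 'cV[R]_m) : A^T = A ->
  (y^T *m A *m x) 0 0 = (x^T *m A *m y) 0 0.
Proof.
move=> sA; transitivity ((y^T *m A *m x)^T 0 0); first by rewrite [RHS]mxE.
by rewrite !trmx_mul trmxK sA mulmxA.
Qed.

Lemma qform_lin_comb m (A : 'M[R]_m) x y t : A^T = A ->
  qform A (x + t *: y) = qform A x + 2 * t * (x^T *m A *m y) 0 0 + t ^+ 2 * qform A y.
Proof.
move=> sA; rewrite /qform [(_ + _)^T]linearD /= [(t *: y)^T]linearZ /=.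
have addE (M N : 'M[R]_1) : (M + N) 0 0 = M 0 0 + N 0 0 by rewrite mxE.
have scaleE (M : 'M[R]_1) : (t *: M) 0 0 = t * M 0 0 by rewrite mxE.
rewrite !mulmxDl !mulmxDr -!scalemxAl -!scalemxAr !addE !scaleE (bilinear_sym x y sA).
ring.
Qed.

Lemma qform_cauchy_schwarz m (A : 'M[R]_m) (x y : 'cV[R]_m) :
  A^T = A -> (forall z, 0 <= qform A z) ->
  ((x^T *m A *m y) 0 0) ^+ 2 <= qform A x * qform A y.
Proof.
move=> sA psdA; set a := qform A x; set b := (x^T *m A *m y) 0 0; set c := qform A y.
have quad_ge0 t : 0 <= a + 2 * t * b + t ^+ 2 * c by rewrite -qform_lin_comb.
have a_ge0 : 0 <= a by apply: psdA.
have [c0|c_neq0] := eqVneq c 0.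
  have [->|b_neq0] := eqVneq b 0; first by rewrite c0 expr0n mulr0.
  have := quad_ge0 (- (a + 1) / (2 * b)); rewrite c0 mulr0 addr0.
  have -> : 2 * (- (a + 1) / (2 * b)) * b = - (a + 1) by field.
  lra.
have c_gt0 : 0 < c by rewrite lt_neqAle eq_sym c_neq0 psdA.
have := quad_ge0 (- b / c).
have -> : a + 2 * (- b / c) * b + (- b / c) ^+ 2 * c = a - b ^+ 2 / c by field.
by rewrite subr_ge0 ler_pdivrMr // mulrC.
Qed.

Lemma qform_perturb_lb m (A B : 'M[R]_m) c : 0 <= c ->
  (forall x, c * sqnorm x <= qform A x) -> `|B - A| <= c / (2 * m.+1%:R) ->
  forall x, c / 2 * sqnorm x <= qform B x.
Proof.
move=> c_ge0 lbA dBA x; rewrite -[B](subrK A) qformDl.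
have m_dBA : m%:R * `|B - A| <= c / 2.
  apply: le_trans (ler_wpM2l (ler0n _ m) dBA) _.
  have -> : m%:R * (c / (2 * m.+1%:R)) = c / 2 * (m%:R / m.+1%:R) by field.
  by rewrite ler_piMr ?divr_ge0 // ler_pdivrMr // mul1r ler_nat.
have := qform_norm_le (B - A) x; rewrite ler_norml => /andP[+ _].
have := ler_wpM2r (sqnorm_ge0 x) m_dBA.
have := lbA x; lra.
Qed.

Lemma norm_le_dist (V : normedZmodType R) (a b : V) e : `|a - b| <= e -> `|a| <= `|b| + e.
Proof. by move=> abe; rewrite -[a](subrK b) addrC (le_trans (ler_normD _ _)) ?lerD2l. Qed.

Lemma qform_argmin_le m (Wt Oi : 'M[R]_m) c (u v : 'cV[R]_m) :
  0 < c -> (forall x, c * sqnorm x <= qform Wt x) -> qform Wt v <= qform Wt u ->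
  qform Oi v <= m%:R * `|Oi| * (m%:R * `|Wt| / c) * sqnorm u.
Proof.
move=> c_gt0 Wt_lb v_min.
have sv_le : sqnorm v <= m%:R * `|Wt| / c * sqnorm u.
  rewrite mulrAC ler_pdivlMr // mulrC (le_trans (Wt_lb v)) // (le_trans v_min) //.
  by have := qform_norm_le Wt u; rewrite ler_norml => /andP[].
have := qform_norm_le Oi v; rewrite ler_norml => /andP[_ /le_trans]; apply.
by rewrite -[leRHS]mulrA; apply: ler_wpM2l; rewrite ?mulr_ge0.
Qed.

End QuadraticForms.

Section PositiveDefinite.
Variable R : realType.

Lemma posdef_qform_ge0 m (A : 'M[R]_m) x : posdef A -> 0 <= qform A x.
Proof.
by move=> [_ pA]; have [->|/pA/ltW//] := eqVneq x 0; rewrite /qform mulmx0 mxE.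
Qed.

Lemma posdef_unitmx m (A : 'M[R]_m) : posdef A -> A \in unitmx.
Proof.
move=> [_ pA]; rewrite -row_free_unit -kermx_eq0; apply/rowV0P => v /sub_kermxP vA.
apply/eqP/negPn/negP => v_neq0; have := pA v^T; rewrite trmx_eq0 v_neq0.
by rewrite trmxK vA mul0mx mxE ltxx => /(_ isT).
Qed.

Lemma qform_invmx m (A : 'M[R]_m) x : A^T = A -> A \in unitmx ->
  qform A (invmx A *m x) = qform (invmx A) x.
Proof.
move=> sA uA; rewrite /qform trmx_mul trmx_inv sA -!mulmxA (mulmxA A) mulmxV //.
by rewrite mul1mx mulmxA.
Qed.

Lemma posdef_invmx m (A : 'M[R]_m) : posdef A -> posdef (invmx A).
Proof.
move=> pdA; have uA := posdef_unitmx pdA; have [sA pA] := pdA.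
split; first by rewrite trmx_inv sA.
move=> x x_neq0; rewrite -[(_ *m _) 0 0]/(qform _ x) -qform_invmx //; apply: pA.
by apply: contra_neq x_neq0 => /(congr1 (mulmx A)); rewrite mulmxA mulmxV // mul1mx mulmx0.
Qed.

Lemma posdef_qform_lb m (A : 'M[R]_m) : posdef A ->
  exists2 c, 0 < c & forall x, c * sqnorm x <= qform A x.
Proof.
move=> pdA; have uA := posdef_unitmx pdA; have sA := pdA.1.
set K := m%:R * `|invmx A|; have K_ge0 : 0 <= K by rewrite mulr_ge0.
exists (K + 1)^-1; first by rewrite invr_gt0 ltr_wpDl.
move=> x; rewrite -ler_pdivlMl ?invr_gt0 ?ltr_wpDl // invrK.
have s_ge0 := sqnorm_ge0 x; have a_ge0 := posdef_qform_ge0 x pdA.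
have ax_Ainvx : (x^T *m A *m (invmx A *m x)) 0 0 = sqnorm x.
  by rewrite -mulmxA (mulmxA A) mulmxV // mul1mx sqnormE.
have := qform_cauchy_schwarz x (invmx A *m x) sA (fun z => posdef_qform_ge0 z pdA).
rewrite ax_Ainvx qform_invmx // => cs.
have := qform_norm_le (invmx A) x; rewrite ler_norml -/K => /andP[_ bK].
have [->|s_neq0] := eqVneq (sqnorm x) 0; first by rewrite mulr_ge0 ?addr_ge0.
have s_gt0 : 0 < sqnorm x by rewrite lt_neqAle eq_sym s_neq0.
have : sqnorm x * sqnorm x <= K * qform A x * sqnorm x.
  by rewrite -expr2 (le_trans cs) // [K * _]mulrC -mulrA; apply: ler_wpM2l.
rewrite ler_pM2r // => sKa; lra.
Qed.

End PositiveDefinite.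

Lemma cvge_near_le (R : realType) (u : nat -> \bar R) (l e : R) :
  u @ \oo --> l%:E -> l < e -> \forall n \near \oo, (u n <= e%:E)%E.
Proof.
move=> /fine_cvgP[u_fin u_l] le; near=> n.
rewrite -(fineK (_ : u n \is a fin_num)); last by near: n.
by rewrite lee_fin ltW //; near: n; exact: cvgr_lt u_l _ le.
Unshelve. all: by end_near.
Qed.

Section ProbabilityToZero.
Context d (T : measurableType d) (R : realType) (P : probability T R).

Definition ev_prob_le (A : nat -> set T) (e : R) :=
  exists C : nat -> set T, (forall n, measurable (C n) /\ A n `<=` C n) /\
    \forall n \near \oo, (P (C n) <= e%:E)%E.

Lemma prob_to0_ev_le A e : prob_to0 P A -> 0 < e -> ev_prob_le A e.
Proof. by move=> [B [mB PB0]] e_gt0; exists B; split => //; exact: cvge_near_le PB0 _. Qed.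

Lemma ev_prob_leU A B e1 e2 : ev_prob_le A e1 -> ev_prob_le B e2 ->
  ev_prob_le (fun n => A n `|` B n) (e1 + e2).
Proof.
move=> [C [mC PC]] [D [mD PD]]; exists (fun n => C n `|` D n); split.
  move=> n; split; first exact: measurableU (mC n).1 (mD n).1.
  exact: setUSS (mC n).2 (mD n).2.
apply: filterS2 PC PD => n PCn PDn.
by rewrite EFinD (le_trans (measureU2 _ (mC n).1 (mD n).1)) // leeD.
Qed.

Lemma ev_prob_le_near_sub A B e : (\forall n \near \oo, A n `<=` B n) ->
  ev_prob_le B e -> ev_prob_le A e.
Proof.
move=> AB [C [mC PC]].
exists (fun n => if `[< A n `<=` B n >] then C n else setT); split.
  move=> n; case: asboolP => [ABn|_]; last by [].
  by split; [exact: (mC n).1 | exact: subset_trans ABn (mC n).2].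
by apply: filterS2 AB PC => n ABn; rewrite asboolT.
Qed.

Lemma ev_prob_le_to0 A : (forall e, 0 < e -> ev_prob_le A e) -> prob_to0 P A.
Proof.
move=> Ae; have /choice[C CA] : forall k : nat, ev_prob_le A k.+1%:R^-1.
  by move=> k; apply: Ae; rewrite invr_gt0.
(* C k is only eventually small: D k replaces it by setT where it is not *)
pose D k n := if `[< (P (C k n) <= (k.+1%:R^-1)%:E)%E >] then C k n else setT.
have mD k n : measurable (D k n) by rewrite /D; case: ifP => // _; exact: ((CA k).1 n).1.
have mcapD n : measurable (\bigcap_k D k n) by exact: bigcapT_measurable.
exists (fun n => \bigcap_k D k n); split.
  by move=> n; split => // w Aw k _; rewrite /D; case: ifP => // _; exact: ((CA k).1 n).2.
apply/fine_cvgP; split; first by apply: nearW => n; exact: fin_num_measure.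
apply/cvgr0Pnorm_lt => eps eps_gt0.
set k := Num.truncn eps^-1.
have k_lt : k.+1%:R^-1 < eps.
  by rewrite -[ltRHS]invrK ltf_pV2 ?posrE ?invr_gt0 //; exact: truncnS_gt.
near=> n.
have PCk : (P (C k n) <= (k.+1%:R^-1)%:E)%E by near: n; exact: (CA k).2.
have : (P (\bigcap_k D k n) <= (k.+1%:R^-1)%:E)%E.
  apply: le_trans (PCk); apply: le_measure; rewrite ?inE //; first exact: ((CA k).1 n).1.
  by move=> w /(_ k I); rewrite /D (asboolT PCk).
rewrite -(fineK (fin_num_measure _ _ (mcapD n))) lee_fin => le_k.
by rewrite ger0_norm ?fine_ge0 ?measure_ge0 // (le_lt_trans le_k).
Unshelve. all: by end_near.
Qed.

Lemma prob_to0U A B : prob_to0 P A -> prob_to0 P B -> prob_to0 P (fun n => A n `|` B n).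
Proof.
move=> A0 B0; apply: ev_prob_le_to0 => e e_gt0; rewrite [e]splitr.
by apply: ev_prob_leU; [apply: prob_to0_ev_le A0 _ | apply: prob_to0_ev_le B0 _]; lra.
Qed.

Lemma prob_to0_bigcup (I : eqType) (s : seq I) (A : I -> nat -> set T) :
  (forall i, i \in s -> prob_to0 P (A i)) ->
  prob_to0 P (fun n => [set w | exists2 i, i \in s & A i n w]).
Proof.
elim: s => [|i s IHs] As0.
  exists (fun=> set0); split; first by move=> n; split => // w [].
  by rewrite measure0; exact: cvg_cst.
have [C [mC PC]] := prob_to0U (As0 i (mem_head i s))
  (IHs (fun j js => As0 j (@mem_behead _ (i :: s) j js))).
exists C; split => // n; split; first exact: (mC n).1.
move=> w [j]; rewrite in_cons => /orP[/eqP-> | js] Ajw; apply: (mC n).2; first by left.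
by right; exists j.
Qed.

End ProbabilityToZero.

Section Tightness.
Variable R : realType.

Definition ramp (M t : R) : R := Num.min 1 (Num.max 0 (t - M)).

Lemma ramp_ge0 M t : 0 <= ramp M t.
Proof. by rewrite le_min ler01 le_max lexx. Qed.

Lemma ramp_le1 M t : ramp M t <= 1.
Proof. by rewrite ge_min lexx. Qed.

Lemma ramp_continuous M : continuous (ramp M).
Proof.
move=> t; apply: (@continuous_min _ _ (fun=> 1) (fun s => Num.max 0 (s - M))).
  exact: cst_continuous.
apply: (@continuous_max _ _ (fun=> 0) (fun s => s - M)); first exact: cst_continuous.
by apply: continuousB; [exact: cvg_id | exact: cst_continuous].
Qed.

Lemma sqnorm_continuous k : continuous (@sqnorm R k).
Proof.
apply: continuous_big => [|i _]; first exact: add_continuous.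
by move=> x; apply: continuousM; exact: coord_continuous.
Qed.

Lemma ramp_le_gt M t : ramp M t <= (M < t)%R%:R.
Proof.
by case: ltP => [_|tM]; [exact: ramp_le1 | rewrite ge_min ge_max lexx subr_le0 tM orbT].
Qed.

Lemma gt_le_ramp M t : (M + 1 < t)%R%:R <= ramp M t.
Proof.
case: ltP => [Mt|_]; last exact: ramp_ge0.
by rewrite le_min lexx le_max lerBrDr addrC (ltW Mt) orbT.
Qed.

Lemma measurable_set_gt d (T : measurableType d) (g : T -> R) a :
  measurable_fun setT g -> measurable [set w | a < g w].
Proof. by move=> mg; rewrite -preimage_itvoy -[X in measurable X]setTI; exact: mg. Qed.

Lemma indic_gtE (T : Type) (g : T -> R) a w :
  \1_[set w | a < g w] w = (a < g w)%R%:R :> R.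
Proof. by rewrite indicE -(asboolb (a < g w)). Qed.

Lemma measurable_sqnorm d (T : measurableType d) k (X : T -> 'cV[R]_k) :
  mx_measurable X -> measurable_fun setT (fun w => sqnorm (X w)).
Proof. by move=> mX; apply: measurable_sum => j; exact: measurable_funX (mX j 0). Qed.

Section RampExpectation.
Context d (T : measurableType d) (P : probability T R) (g : T -> R).
Hypothesis mg : measurable_fun setT g.

Let mramp M : measurable_fun setT (ramp M \o g).
Proof.
by apply: measurableT_comp mg; apply: continuous_measurable_fun => t; exact: ramp_continuous.
Qed.

Lemma expectation_ramp_le M : ('E_P[ramp M \o g] <= P [set w | (M < g w)%R])%E.
Proof.
rewrite unlock -[X in P X]setIT -integral_indic //; last exact: measurable_set_gt.
apply: ge0_le_integral => //.
- by move=> w _; rewrite lee_fin ramp_ge0.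
- exact/measurable_EFinP.
- by apply/measurable_EFinP/measurable_indic; exact: measurable_set_gt.
by move=> w _; rewrite lee_fin indic_gtE ramp_le_gt.
Qed.

Lemma prob_gt_le_expectation_ramp M : (P [set w | (M + 1 < g w)%R] <= 'E_P[ramp M \o g])%E.
Proof.
rewrite unlock -[X in P X]setIT -integral_indic //; last exact: measurable_set_gt.
apply: ge0_le_integral => //.
- by apply/measurable_EFinP/measurable_indic; exact: measurable_set_gt.
- exact/measurable_EFinP.
by move=> w _; rewrite lee_fin indic_gtE gt_le_ramp.
Qed.

Lemma prob_tail_small e : 0 < e -> exists M : R, (P [set w | (M < g w)%R] <= e%:E)%E.
Proof.
move=> e_gt0; pose F (m : nat) := [set w | m%:R < g w].
have mF m : measurable (F m) by exact: measurable_set_gt.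
have capF : \bigcap_m F m = set0.
  apply/seteqP; split => // w /(_ (Num.truncn (g w)).+1 I) /ltW.
  by rewrite leNgt truncnS_gt.
have F_dec : nonincreasing_seq F.
  by move=> m n mn; apply/subsetPset => w; apply: le_lt_trans; rewrite ler_nat.
have := nonincreasing_cvg_mu (le_lt_trans (probability_le1 P (mF 0)) (ltey _)) mF
  (bigcapT_measurable mF) F_dec.
rewrite capF measure0 => /cvge_near_le/(_ e_gt0) PF_le.
by near \oo => m; exists m%:R; near: m.
Unshelve. all: by end_near.
Qed.

End RampExpectation.

Lemma cvg_dist_gauss_tight d (T : measurableType d) (P : probability T R) k
    (X : nat -> T -> 'cV[R]_k) mu Sig :
  (forall n, mx_measurable (X n)) -> cvg_dist_gauss P X mu Sig ->
  forall e, 0 < e -> exists M, ev_prob_le P (fun n => [set w | M < sqnorm (X n w)]) e.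
Proof.
move=> mX [d2 [T2 [P2 [Y [[mY _] XY]]]]] e e_gt0.
have msY := measurable_sqnorm mY; have msX n := measurable_sqnorm (mX n).
have [M PY_le] := prob_tail_small P2 msY (divr_gt0 e_gt0 (ltr0n _ 2)).
(* phi is continuous and bounded, so X n ->_d Y carries the tail bound of Y over to X n *)
pose phi := ramp M \o @sqnorm R k.
have phi_cont : continuous phi.
  by move=> x; apply: continuous_comp; [exact: sqnorm_continuous | exact: ramp_continuous].
have phi_bnd : exists B, forall x, `|phi x| <= B.
  by exists 1 => x; rewrite ger0_norm ?ramp_ge0 ?ramp_le1.
have EY_le : ('E_P2[phi \o Y] <= (e / 2)%:E)%E.
  exact: le_trans (expectation_ramp_le P2 msY M) PY_le.
have EY_fin : ('E_P2[phi \o Y] \is a fin_num)%E.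
  rewrite ge0_fin_numE ?(le_lt_trans EY_le) ?ltey //.
  by apply: expectation_ge0 => w; exact: ramp_ge0.
have := XY phi phi_cont phi_bnd; rewrite -(fineK EY_fin) => /cvge_near_le EX_le.
exists (M + 1), (fun n => [set w | M + 1 < sqnorm (X n w)]); split.
  by move=> n; split => //; exact: measurable_set_gt.
apply: filterS (EX_le e _) => [n|]; first exact/le_trans/prob_gt_le_expectation_ramp.
by rewrite -lte_fin (fineK EY_fin) (le_lt_trans EY_le) // lte_fin; lra.
Qed.

End Tightness.

Section JStatistic.
Variable R : realType.

Lemma sqnorm_selmx k (S : {set 'I_k}) (x : 'cV[R]_k) :
  sqnorm (selmx S *m x) <= #|S|%:R * sqnorm x.
Proof.
have selE i : (selmx S *m x) i 0 = x (enum_val i) 0.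
  rewrite mxE (bigD1 (enum_val i)) //= big1 ?addr0 => [|j /negPf ji].
    by rewrite mxE eqxx mul1r.
  by rewrite mxE ji mul0r.
apply: (@le_trans _ _ (\sum_(i < #|S|) sqnorm x)).
  by apply: ler_sum => i _; rewrite selE sqr_entry_le_sqnorm.
by rewrite sumr_const card_ord mulr_natl.
Qed.

Lemma mx_measurable_scale_fbar d (T : measurableType d) (U : Type) r k
    (f : U -> 'rV[R]_r -> 'cV[R]_k) (Z : nat -> nat -> T -> U) n th a :
  (forall i, mx_measurable (fun w => f (Z n i w) th)) ->
  mx_measurable (fun w => a *: fbar f Z n th w).
Proof.
move=> mf i j; under eq_fun do rewrite !mxE summxE.
by do 2 apply: measurable_funM => //; apply: measurable_sum => l; exact: mf.
Qed.

Lemma Jstat_le_sqnorm (T U : Type) r k (f : U -> 'rV[R]_r -> 'cV[R]_k)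
    (Z : nat -> nat -> T -> U) (S : {set 'I_k}) (th th1 : 'rV[R]_r)
    (Wt W Oi O : 'M[R]_#|S|) n w cW dO :
  0 < cW -> (forall x, cW * sqnorm x <= qform W x) ->
  `|Wt - W| <= cW / (2 * #|S|.+1%:R) -> `|Oi - O| <= dO ->
  gmm_obj f Z S Wt n th1 w <= gmm_obj f Z S Wt n th w ->
  Jstat f Z S th1 Oi n w <=
    #|S|%:R * (`|O| + dO) * (#|S|%:R * (`|W| + cW / (2 * #|S|.+1%:R)) / (cW / 2)) *
    sqnorm (selmx S *m (Num.sqrt n%:R *: fbar f Z n th w)).
Proof.
move=> cW_gt0 W_lb Wt_W Oi_O th1_min.
have cW2_gt0 : 0 < cW / 2 by rewrite divr_gt0.
have := qform_argmin_le Oi cW2_gt0 (qform_perturb_lb (ltW cW_gt0) W_lb Wt_W) th1_min.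
rewrite /Jstat -(scalemxAr (Num.sqrt n%:R)) sqnormZ sqr_sqrtr // => Oi_v.
apply: le_trans (ler_wpM2l (ler0n _ n) Oi_v) _; rewrite mulrCA.
apply: ler_wpM2r; first by rewrite mulr_ge0 ?sqnorm_ge0.
apply: ler_pM; rewrite ?mulr_ge0 ?invr_ge0 ?(ltW cW2_gt0) //.
  by apply: ler_wpM2l => //; exact: norm_le_dist.
apply: ler_wpM2r; rewrite ?invr_ge0 ?(ltW cW2_gt0) //.
by apply: ler_wpM2l => //; exact: norm_le_dist.
Qed.

Lemma Jstat_ge0 (T U : Type) r k (f : U -> 'rV[R]_r -> 'cV[R]_k)
    (Z : nat -> nat -> T -> U) (S : {set 'I_k}) (th : 'rV[R]_r) (Oi O : 'M[R]_#|S|) n w c :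
  0 <= c -> (forall x, c * sqnorm x <= qform O x) -> `|Oi - O| <= c / (2 * #|S|.+1%:R) ->
  0 <= Jstat f Z S th Oi n w.
Proof.
move=> c_ge0 O_lb Oi_O; rewrite /Jstat mulr_ge0 //.
by apply: le_trans (qform_perturb_lb c_ge0 O_lb Oi_O _); rewrite mulr_ge0 ?divr_ge0 ?sqnorm_ge0.
Qed.

Lemma msc_full_lt (h : nat -> R) (jF jS K kap : R) m s :
  {homo h : a b / (a < b)%N >-> a < b} -> (s < m)%N -> jF <= K -> 0 <= jS ->
  Num.max (K / (h m - h m.-1)) 0 < kap -> jF - h m * kap < jS - h s * kap.
Proof.
move=> h_incr s_lt jF_le jS_ge0.
have m_gt0 : (0 < m)%N := leq_ltn_trans (leq0n s) s_lt.
have gap_gt0 : 0 < h m - h m.-1 by rewrite subr_gt0; apply: h_incr; rewrite ltn_predL.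
have hs_le : h s <= h m.-1 by apply: (ltW_homo h_incr); rewrite leEnat -ltnS prednK.
rewrite gt_max ltr_pdivrMr // => /andP[K_lt kap_gt0].
have : kap * (h m - h m.-1) <= kap * (h m - h s).
  by apply: ler_wpM2l; [exact: ltW | rewrite lerD2l lerN2].
lra.
Qed.

End JStatistic.

Unset Implicit Arguments. Set Strict Implicit. Set Printing Implicit Defensive.

Theorem theorem10
  (R : realType)
  (* probability space carrying the triangular array *)
  (d : measure_display) (T : measurableType d) (P : probability T R)
  (* probability space carrying the limit Z (with law of Z) *)
  (d' : measure_display) (T' : measurableType d') (P' : probability T' R)
  (* data space *)
  (U : topologicalType)
  (r p q : nat) (Theta : set 'rV[R]_r) (th0 : 'rV[R]_r)
  (f : U -> 'rV[R]_r -> 'cV[R]_(p + q)) (tau : 'cV[R]_q)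
  (Z : nat -> nat -> T -> U) (Zl : T' -> U)
  (Sc : {set {set 'I_(p + q)}})
  (Wt : forall S : {set 'I_(p + q)}, nat -> T -> 'M[R]_#|S|)
  (W : forall S : {set 'I_(p + q)}, 'M[R]_#|S|)
  (that : {set 'I_(p + q)} -> nat -> T -> 'rV[R]_r)
  (Oinv : forall S : {set 'I_(p + q)}, nat -> T -> 'M[R]_#|S|)
  (h : nat -> R) (kappa : nat -> R) :
  (* E f(Z, th), E grad f(Z, th), Omega = Var f(Z, th0) *)
  let Ef := fun th => Emx P' (fun w => f (Zl w) th) in
  let EF := fun th => Emx P' (fun w => grad (f (Zl w)) th) in
  let Omega := varmx P' (fun w => f (Zl w) th0) in
  (* the collection of moment sets *)
  [set: 'I_(p + q)]%SET \in Sc ->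
  (forall S, S \in Sc -> (r < #|S|)%N) ->
  (* the triangular array *)
  (forall n i, borel_rv (Z n i)) -> borel_rv Zl ->
  (forall n i th, Theta th -> mx_measurable (fun w => f (Z n i w) th)) ->
  (forall th, Theta th -> mx_measurable (fun w => f (Zl w) th)) ->
  (forall n i, (i < n)%N ->
     Emx P (fun w => usubmx (f (Z n i w) th0)) = 0) ->
  (forall n i, (i < n)%N ->
     Emx P (fun w => dsubmx (f (Z n i w) th0)) = (Num.sqrt n%:R)^-1 *: tau) ->
  (forall e : R, 0 < e -> exists M : R, forall n i, (i < n)%N ->
     (\int[P]_(w in [set w | (M < `|f (Z n i w) th0|)%R]) (`|f (Z n i w) th0|)%:E
        <= e%:E)%E) ->
  (forall i, cvg_dist P P' (fun n => Z n i) Zl) ->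
  (* E f(Z, th) exists, Var f(Z, th0) exists *)
  (forall th, Theta th -> forall j,
     P'.-integrable [set: T'] (fun w => ((f (Zl w) th) j 0)%:E)) ->
  (forall j, P'.-integrable [set: T'] (fun w => (((f (Zl w) th0) j 0) ^+ 2)%:E)) ->
  (* parameter space *)
  compact Theta -> (interior Theta) th0 ->
  (* weights *)
  (forall S, S \in Sc -> cvg_prob P (Wt S) (W S)) ->
  (forall S, S \in Sc -> posdef (W S)) ->
  (* identification *)
  (forall S, S \in Sc -> forall th, Theta th ->
     (W S *m (selmx S *m Ef th) = 0 <-> th = th0)) ->
  {within Theta, continuous Ef} ->
  (* uniform convergence of the sample moments *)
  (forall e : R, 0 < e -> prob_to0 P (fun n =>
     [set w | exists2 th, Theta th & e < `|fbar f Z n th w - Ef th|])) ->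
  (* a.s. differentiability near th0 and uniform convergence of the
     sample gradient on that neighbourhood *)
  (exists N : set 'rV[R]_r, nbhs th0 N /\
     {ae P', forall w, forall th, N th ->
        differentiable (fun t => (f (Zl w) t)^T) th} /\
     (forall n i, {ae P, forall w, forall th, N th ->
        differentiable (fun t => (f (Z n i w) t)^T) th}) /\
     (forall e : R, 0 < e -> prob_to0 P (fun n =>
        [set w | exists2 th, N th & e < `|gradbar f Z n th w - EF th|]))) ->
  (* CLT: sqrt n f_n(th0) ->_d M + (0', tau')', M ~ N(0, Omega) *)
  cvg_dist_gauss P (fun n w => Num.sqrt n%:R *: fbar f Z n th0 w)
    (col_mx 0 tau) Omega ->
  (* F_S' W_S F_S invertible *)
  (forall S, S \in Sc ->
     let F := selmx S *m EF th0 in (F^T *m W S *m F) \in unitmx) ->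
  (* the GMM estimators *)
  (forall S, S \in Sc -> forall n w, Theta (that S n w) /\
     forall th, Theta th ->
       gmm_obj f Z S (Wt S n w) n (that S n w) w <= gmm_obj f Z S (Wt S n w) n th w) ->
  (* Omega_S positive definite, Omegahat_S^-1 consistent for Omega_S^-1 *)
  (forall S, S \in Sc -> posdef (selmx S *m Omega *m (selmx S)^T)) ->
  (forall S, S \in Sc ->
     cvg_prob P (Oinv S) (invmx (selmx S *m Omega *m (selmx S)^T))) ->
  (* the moment selection criterion *)
  {homo h : a b / (a < b)%N >-> a < b} ->
  (forall M : R, \forall n \near \oo, M < kappa n) ->
  (fun n => kappa n / n%:R) @ \oo --> 0 ->
  let MSC := fun n S w =>
    Jstat f Z S (that S n w) (Oinv S n w) n w - h #|S| * kappa n in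
  (* the full moment set is the unique minimiser of MSC w.p.a. 1 *)
  prob_to0 P (fun n => [set w | ~ (forall S, S \in Sc -> S != [set: 'I_(p + q)]%SET ->
                                     MSC n [set: 'I_(p + q)]%SET w < MSC n S w)]).
Proof.
move=> Ef EF Omega full_in _ _ _ mf _ _ _ _ _ _ _ _ th0_int Wt_cvg W_pd _ _ _ _ clt _
  that_min Omega_pd Oinv_cvg h_incr kappa_oo _ MSC.
set F := [set: 'I_(p + q)]%SET; set m := #|F|.
pose Om S := invmx (selmx S *m Omega *m (selmx S)^T).
have th0_in : Theta th0 := interior_subset th0_int.
have [cW cW_gt0 W_lb] := posdef_qform_lb (W_pd F full_in).
have /choice[c c_spec] : forall S, exists c,
    0 < c /\ (S \in Sc -> forall x, c * sqnorm x <= qform (Om S) x).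
  move=> S; have [SSc|_] := boolP (S \in Sc); last by exists 1.
  by have [c ? ?] := posdef_qform_lb (posdef_invmx (Omega_pd S SSc)); exists c.
pose dW := cW / (2 * m.+1%:R); pose dO S := c S / (2 * #|S|.+1%:R).
have dO_gt0 S : 0 < dO S by rewrite divr_gt0 ?(c_spec S).1.
pose Bad n := [set w | dW < `|Wt F n w - W F|] `|`
  [set w | exists2 S, S \in enum Sc & dO S < `|Oinv S n w - Om S|].
have Bad_to0 : prob_to0 P Bad.
  apply: prob_to0U; first by apply: Wt_cvg; rewrite ?divr_gt0.
  by apply: prob_to0_bigcup => S; rewrite mem_enum => SSc; exact: Oinv_cvg.
apply: ev_prob_le_to0 => e e_gt0.
have mX n : mx_measurable (fun w => Num.sqrt n%:R *: fbar f Z n th0 w).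
  by apply: mx_measurable_scale_fbar => i; exact: mf.
have [M XM] := cvg_dist_gauss_tight mX clt (divr_gt0 e_gt0 (ltr0n _ 2)).
(* outside Bad n and the tail event of XM, J_n(full) <= K *)
pose K := m%:R * (`|Om F| + dO F) * (m%:R * (`|W F| + dW) / (cW / 2)) * (m%:R * M).
rewrite [e]splitr; apply: ev_prob_le_near_sub (ev_prob_leU XM (prob_to0_ev_le Bad_to0 _)).
  near=> n => w notMSC; apply: contrapT => /not_orP[/negP X_le /not_orP[/negP Wt_near O_near]].
  apply: notMSC => S SSc SF; move: X_le Wt_near; rewrite -!leNgt => X_le Wt_near.
  have O_le S' : S' \in Sc -> `|Oinv S' n w - Om S'| <= dO S'.
    by move=> S'Sc; rewrite leNgt; apply/negP => lt; apply: O_near; exists S'; rewrite ?mem_enum.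
  apply: (@msc_full_lt _ h _ _ K); first exact: h_incr.
  - by rewrite /m proper_card // properT.
  - apply: le_trans (Jstat_le_sqnorm cW_gt0 W_lb Wt_near (O_le F full_in)
      ((that_min F full_in n w).2 th0 th0_in)) _.
    apply: ler_wpM2l; last by apply: le_trans (sqnorm_selmx F _) _; exact: ler_wpM2l.
    by rewrite ?(ltW (dO_gt0 F), ltW cW_gt0, mulr_ge0, addr_ge0, invr_ge0, divr_ge0).
  - exact: Jstat_ge0 (ltW (c_spec S).1) ((c_spec S).2 SSc) (O_le S SSc).
  - by near: n; exact: kappa_oo.
by rewrite divr_gt0.
Unshelve. all: by end_near.
Qed.
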